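(* For every TRS $\mathcal{R}$, $\to_\mathcal{R}^*\cdot\to_{\mathsf{CPS}(\mathcal{R})}\cdot\to_\mathcal{R}^* \;=\; \to_\mathcal{R}^*\cdot\to_{\mathsf{PCPS}(\mathcal{R})}\cdot\to_\mathcal{R}^*$; in particular $\mathsf{CPS}(\mathcal{R})/\mathcal{R}$ is terminating if and only if $\mathsf{PCPS}(\mathcal{R})/\mathcal{R}$ is terminating.
   Context: A TRS is a set of rules $\ell\to r$ ($\ell\notin\mathcal{V}$, $\mathcal{V}ar(r)\subseteq\mathcal{V}ar(\ell)$). $\mathcal{P}/\mathcal{R}$ terminating means $\to_\mathcal{R}^*\cdot\to_\mathcal{P}\cdot\to_\mathcal{R}^*$ admits no infinite chain. Critical peak of $\mathcal{R}$: for variants $\ell_1\to r_1,\ell_2\to r_2$ of $\mathcal{R}$-rules without common variables, a function-symbol position $p$ of $\ell_2$, a most general unifier $\sigma$ of $\ell_1$ and $\ell_2|_p$, with $\ell_1\to r_1$ not a variant of $\ell_2\to r_2$ if $p$ is the root: source $s=\ell_2\sigma$, results $t=(\ell_2\sigma)[r_1\sigma]_p$, $u=r_2\sigma$. Parallel critical peak of $\mathcal{R}$: for variants $\ell\to r$ and $\ell_p\to r_p$ ($p\in P$) of $\mathcal{R}$-rules, pairwise variable-disjoint, $P$ a non-empty set of pairwise parallel function-symbol positions of $\ell$, $\sigma$ an mgu of $\{\ell_p\approx\ell|_p\}_{p\in P}$, and $\ell_\epsilon\to r_\epsilon$ not a variant of $\ell\to r$ if $P=\{\epsilon\}$: source $s=\ell\sigma$,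 results $t=(\ell\sigma)[r_p\sigma]_{p\in P}$, $u=r\sigma$. $\mathsf{CPS}(\mathcal{R})=\{s\to t,s\to u\mid (t,s,u)$ a critical peak$\}$ and $\mathsf{PCPS}(\mathcal{R})=\{s\to t,s\to u\mid(t,s,u)$ a parallel critical peak$\}$. *)

From mathcomp Require Import all_boot.
From Stdlib Require Import Relations.
From Stdlib Require List.

Set Implicit Arguments.
Unset Strict Implicit.
Unset Printing Implicit Defensive.

Section TRS.
Variables (F V : Type).

Inductive term : Type :=
| Var of V
| Fun of F & seq term.

Definition rule := (term * term)%type.

Fixpoint subst (sg : V -> term) (t : term) : term :=
  match t with
  | Var x => sg x
  | Fun f ts => Fun f (map (subst sg) ts)
  end.

Inductive occurs (x : V) : term -> Prop :=
| occ_var : occurs x (Var x)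
| occ_fun f ts t : List.In t ts -> occurs x t -> occurs x (Fun f ts).

Definition occurs_rule (x : V) (rl : rule) : Prop := occurs x rl.1 \/ occurs x rl.2.

(* Positions are sequences of (0-based) argument indices. *)
Definition pos := seq nat.

Fixpoint subterm_at (t : term) (p : pos) : option term :=
  match p with
  | [::] => Some t
  | i :: q =>
      match t with
      | Var _ => None
      | Fun _ ts =>
          match List.nth_error ts i with
          | Some u => subterm_at u q
          | None => None
          end
      end
  end.

Fixpoint upd_nth (A : Type) (g : A -> A) (xs : seq A) (i : nat) : seq A :=
  match xs, i with
  | [::], _ => [::]
  | x :: xs', 0 => g x :: xs'
  | x :: xs', i'.+1 => x :: upd_nth g xs' i'
  end.

(* t[u]_p  (t unchanged if p is not a position of t) *)
Fixpoint replace_at (t : term) (p : pos) (u : term) : term :=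
  match p with
  | [::] => u
  | i :: q =>
      match t with
      | Var x => Var x
      | Fun f ts => Fun f (upd_nth (fun ti => replace_at ti q u) ts i)
      end
  end.

Definition fun_pos (t : term) (p : pos) : Prop :=
  exists f ts, subterm_at t p = Some (Fun f ts).

Definition parallel (p q : pos) : bool := ~~ prefix p q && ~~ prefix q p.

Definition is_trs (R : rule -> Prop) : Prop :=
  forall l r, R (l, r) ->
    (exists f ts, l = Fun f ts) /\ (forall x, occurs x r -> occurs x l).

Definition rstep (R : rule -> Prop) (s t : term) : Prop :=
  exists l r (sg : V -> term) (p : pos),
    R (l, r) /\ subterm_at s p = Some (subst sg l) /\ t = replace_at s p (subst sg r).

Definition rstar (R : rule -> Prop) : relation term := clos_refl_trans term (rstep R).

Definition rel_mid (R P : rule -> Prop) (s t : term) : Prop :=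
  exists s' t', rstar R s s' /\ rstep P s' t' /\ rstar R t' t.

Definition rel_terminating (P R : rule -> Prop) : Prop :=
  ~ exists a : nat -> term, forall i, rel_mid R P (a i) (a i.+1).

Definition variant (rl' rl : rule) : Prop :=
  exists pi : V -> V, bijective pi /\
    rl'.1 = subst (fun x => Var (pi x)) rl.1 /\ rl'.2 = subst (fun x => Var (pi x)) rl.2.

Definition variant_of (R : rule -> Prop) (rl : rule) : Prop :=
  exists rl0, R rl0 /\ variant rl rl0.

Definition var_disjoint (rl1 rl2 : rule) : Prop :=
  forall x, ~ (occurs_rule x rl1 /\ occurs_rule x rl2).

Definition unifies (sg : V -> term) (E : term * term -> Prop) : Prop :=
  forall e, E e -> subst sg e.1 = subst sg e.2.

Definition mgu (sg : V -> term) (E : term * term -> Prop) : Prop :=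
  unifies sg E /\
  forall tau, unifies tau E -> exists d : V -> term, forall x, tau x = subst d (sg x).

Definition crit_peak (R : rule -> Prop) (t s u : term) : Prop :=
  exists (l1 r1 l2 r2 : term) (p : pos) (sg : V -> term),
    variant_of R (l1, r1) /\ variant_of R (l2, r2) /\ var_disjoint (l1, r1) (l2, r2) /\
    fun_pos l2 p /\
    mgu sg (fun e => e.1 = l1 /\ subterm_at l2 p = Some e.2) /\
    (p = [::] -> ~ variant (l1, r1) (l2, r2)) /\
    s = subst sg l2 /\ t = replace_at (subst sg l2) p (subst sg r1) /\ u = subst sg r2.

(* (l sg)[r_p sg]_{p in P}; the order is irrelevant as positions are parallel *)
Definition par_replace (t : term) (P : seq pos) (g : pos -> term) : term :=
  foldr (fun p acc => replace_at acc p (g p)) t P.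

(* (t, s, u) is a parallel critical peak of R; P is a finite set given as a
   duplicate-free list, and the rules l_p -> r_p are given by lp, rp. *)
Definition par_crit_peak (R : rule -> Prop) (t s u : term) : Prop :=
  exists (l r : term) (lp rp : pos -> term) (P : seq pos) (sg : V -> term),
    variant_of R (l, r) /\
    (forall p, p \in P -> variant_of R (lp p, rp p)) /\
    (forall p, p \in P -> var_disjoint (l, r) (lp p, rp p)) /\
    (forall p q, p \in P -> q \in P -> p != q -> var_disjoint (lp p, rp p) (lp q, rp q)) /\
    P != [::] /\ uniq P /\
    (forall p, p \in P -> fun_pos l p) /\
    (forall p q, p \in P -> q \in P -> p != q -> parallel p q) /\
    mgu sg (fun e => exists p, p \in P /\ e.1 = lp p /\ subterm_at l p = Some e.2) /\
    (P = [:: [::]] -> ~ variant (lp [::], rp [::]) (l, r)) /\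
    s = subst sg l /\
    t = par_replace (subst sg l) P (fun p => subst sg (rp p)) /\
    u = subst sg r.

Definition CPS (R : rule -> Prop) : rule -> Prop :=
  fun rl => exists t u, crit_peak R t rl.1 u /\ (rl.2 = t \/ rl.2 = u).

Definition PCPS (R : rule -> Prop) : rule -> Prop :=
  fun rl => exists t u, par_crit_peak R t rl.1 u /\ (rl.2 = t \/ rl.2 = u).

End TRS.

From mathcomp Require Import all_boot zify.
From Stdlib Require Import Relations ClassicalEpsilon.
From Stdlib Require List.

Set Implicit Arguments.
Unset Strict Implicit.
Unset Printing Implicit Defensive.

(* Every critical peak is a parallel critical peak with a single position, so
   ->_CPS is contained in ->_PCPS.  Conversely, let (t, s, u) be a parallel
   critical peak built from l -> r, rules l_p -> r_p (p in P) and an mgu sg of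
   {l_p = l|_p}.  Fix p in P.  Since sg unifies l_p and l|_p, syntactic
   unification yields an mgu sp of this single equation, and sg = sp d for some d.
   The critical peak (t', s', u') of l_p -> r_p with l -> r at p (computed with
   sp) then satisfies s = s' d, u = u' d and t' d ->_R^* t, the remaining steps
   contracting the redexes at the other, pairwise parallel, positions of P.
   Since rewriting is closed under substitutions and contexts, each
   ->_PCPS step is a ->_CPS step followed by ->_R^*, so both relative rewrite
   relations ->_R^* . ->_X . ->_R^* coincide, and so does their termination. *)

Section Substitutions.
Variables (F V : Type).
Notation tm := (term F V).

Fixpoint term_nested_ind (P : tm -> Prop) (HVar : forall x, P (Var F x))
  (HFun : forall f ts, (forall t, List.In t ts -> P t) -> P (Fun f ts)) (t : tm) : P t :=
  match t with
  | Var x => HVar x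
  | Fun f ts => HFun f ts
     ((fix args (l : seq tm) : forall u, List.In u l -> P u :=
        match l as l0 return forall u, List.In u l0 -> P u with
        | [::] => fun u H => False_ind _ H
        | v :: l' => fun u H => match H with
                     | or_introl E => eq_ind v P (term_nested_ind HVar HFun v) u E
                     | or_intror H' => args l' u H' end
        end) ts)
  end.

Lemma subst_ext_occ (s1 s2 : V -> tm) t :
  (forall x, occurs x t -> s1 x = s2 x) -> subst s1 t = subst s2 t.
Proof.
elim/term_nested_ind: t => [x|f ts IH] H /=; first by apply: H; constructor.
congr Fun; apply: List.map_ext_in => u Hu; apply: IH => // x Hx.
by apply: H; econstructor; eauto.
Qed.

Lemma subst_ext (s1 s2 : V -> tm) t : s1 =1 s2 -> subst s1 t = subst s2 t.
Proof. by move=> H; apply: subst_ext_occ => x _. Qed.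

Lemma subst_comp (s d : V -> tm) t :
  subst d (subst s t) = subst (fun x => subst d (s x)) t.
Proof.
elim/term_nested_ind: t => [x|f ts IH] //=.
by rewrite -map_comp; congr Fun; apply: List.map_ext_in.
Qed.

Lemma subst_var t : subst (@Var F V) t = t.
Proof.
elim/term_nested_ind: t => [x|f ts IH] //=.
by congr Fun; rewrite -[RHS]map_id; apply: List.map_ext_in.
Qed.

Lemma occurs_var (x y : V) : occurs x (Var F y) -> x = y.
Proof. by move=> H; inversion H. Qed.

Lemma occurs_subst y (s : V -> tm) t :
  occurs y (subst s t) -> exists z, occurs z t /\ occurs y (s z).
Proof.
elim/term_nested_ind: t => [x|f ts IH] /= H; first by exists x; split => //; constructor.
inversion H as [|g us u Hin Hocc]; subst.
have [v [Ev Hv]] := proj1 (List.in_map_iff _ _ _) Hin; subst u.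
have [z [Hz1 Hz2]] := IH v Hv Hocc.
by exists z; split => //; econstructor; eauto.
Qed.

Fixpoint tsize (t : tm) : nat :=
  match t with Var _ => 1 | Fun _ ts => (sumn (map tsize ts)).+1 end.

Lemma tsize_gt0 (t : tm) : 0 < tsize t.
Proof. by case: t. Qed.

Lemma tsize_arg (s : V -> tm) u ts :
  List.In u ts -> tsize (subst s u) <= sumn (map tsize (map (subst s) ts)).
Proof. by elim: ts => //= a l IH [->|/IH]; [apply: leq_addr | move/leq_trans; apply; apply: leq_addl]. Qed.

Lemma occurs_tsize x (s : V -> tm) t : occurs x t -> tsize (s x) <= tsize (subst s t).
Proof. by elim=> //= f ts u Hin _ IH; apply: leq_trans IH (leq_trans (tsize_arg s Hin) _). Qed.

(* Occurs check: a variable is strictly smaller than any proper superterm. *)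
Lemma occurs_tsize_fun x (s : V -> tm) f ts :
  occurs x (Fun f ts) -> tsize (s x) < tsize (subst s (Fun f ts)).
Proof.
move=> H; inversion H as [|g us u Hin Hocc]; subst => /=.
by rewrite ltnS; apply: leq_trans (occurs_tsize s Hocc) (tsize_arg s Hin).
Qed.

End Substitutions.

Arguments tsize {F V} t.
Section Unification.
Variables (F V : Type).
Notation tm := (term F V).
Notation eqn := (tm * tm)%type.

(* Finite systems of equations, their unifiers, and the two termination measures
   of syntactic unification: a list covering the variables and the total size. *)
Definition eqset (Es : seq eqn) : eqn -> Prop := fun e => List.In e Es.
Definition unifiable (Es : seq eqn) : Prop := exists t, unifies t (eqset Es).
Definition esize (Es : seq eqn) : nat := sumn (map (fun e => tsize e.1 + tsize e.2) Es).
Definition covers (vs : seq V) (Es : seq eqn) : Prop :=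
  forall x e, List.In e Es -> occurs x e.1 \/ occurs x e.2 -> List.In x vs.

Lemma mgu_equiv E1 E2 (s : V -> tm) :
  (forall t, unifies t E1 <-> unifies t E2) -> mgu s E1 -> mgu s E2.
Proof. by move=> H [H1 H2]; split; [apply/H | move=> t /H; apply: H2]. Qed.

Lemma mgu_ext E1 E2 (s : V -> tm) : (forall e, E1 e <-> E2 e) -> mgu s E1 -> mgu s E2.
Proof. by move=> H; apply: mgu_equiv => t; split=> Ht e He; apply: Ht; apply/H. Qed.

Lemma mgu_nil : mgu (@Var F V) (eqset [::]).
Proof. by split=> [e []|t _]; exists t. Qed.

Lemma unifies_cons t e Es :
  unifies t (eqset (e :: Es)) <-> subst t e.1 = subst t e.2 /\ unifies t (eqset Es).
Proof.
split=> [H|[H1 H2] e' [<-|He']] //; last exact: H2.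
by split=> [|e' He']; apply: H; [left | right].
Qed.

Lemma unifies_cat t Es1 Es2 :
  unifies t (eqset (Es1 ++ Es2)) <-> unifies t (eqset Es1) /\ unifies t (eqset Es2).
Proof.
split=> [H|[H1 H2] e He].
  by split=> e He; apply: H; apply: List.in_or_app; [left | right].
by case: (List.in_app_or _ _ _ He); [apply: H1 | apply: H2].
Qed.

Lemma unifies_zip t (ts us : seq tm) : size ts = size us ->
  (map (subst t) ts = map (subst t) us <-> unifies t (eqset (zip ts us))).
Proof.
elim: ts us => [|a ts IH] [|b us] //= Hs; first by split=> // _ e [].
by case: Hs => Hs; rewrite unifies_cons /= -IH //; split=> [[-> ->]|[-> ->]].
Qed.

Lemma unifies_swap t a b Es :
  unifies t (eqset ((a, b) :: Es)) <-> unifies t (eqset ((b, a) :: Es)).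
Proof. by rewrite !unifies_cons /=; split; case=> E H; split. Qed.

Lemma unifies_drop t a Es : unifies t (eqset ((a, a) :: Es)) <-> unifies t (eqset Es).
Proof. by rewrite unifies_cons; split=> [[]|]. Qed.

Lemma unifies_decompose t f (ts us : seq tm) Es : size ts = size us ->
  unifies t (eqset ((Fun f ts, Fun f us) :: Es)) <-> unifies t (eqset (zip ts us ++ Es)).
Proof.
move=> Hs; rewrite unifies_cons unifies_cat -unifies_zip //=.
by split=> -[E H]; split=> //; [case: E | rewrite E].
Qed.

Lemma in_zip (ts us : seq tm) a b :
  List.In (a, b) (zip ts us) -> List.In a ts /\ List.In b us.
Proof.
elim: ts us => [|a' ts IH] [|b' us] //= [[-> ->]|/IH [? ?]]; first by split; left.
by split; right.
Qed.

Lemma esize_zip (ts us : seq tm) : size ts = size us ->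
  esize (zip ts us) = sumn (map tsize ts) + sumn (map tsize us).
Proof. by elim: ts us => [|a ts IH] [|b us] //= [] Hs; rewrite /esize /= -/(esize _) IH //; lia. Qed.

Lemma esize_cat Es1 Es2 : esize (Es1 ++ Es2) = esize Es1 + esize Es2.
Proof. by rewrite /esize map_cat sumn_cat. Qed.

Definition elim_var (x : V) (b : tm) : V -> tm :=
  fun y => if excluded_middle_informative (y = x) then b else Var F y.

Definition subst_eqn (s : V -> tm) (e : eqn) : eqn := (subst s e.1, subst s e.2).

Lemma elim_var_unifier (t : V -> tm) x b u :
  t x = subst t b -> subst t (subst (elim_var x b) u) = subst t u.
Proof.
move=> Ht; rewrite subst_comp; apply: subst_ext => y; rewrite /elim_var.
by case: excluded_middle_informative => [E|_] //=; rewrite E.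
Qed.

Lemma elim_var_fixes x b : ~ occurs x b -> subst (elim_var x b) b = b.
Proof.
move=> Hx; rewrite -[RHS]subst_var; apply: subst_ext_occ => y Hy; rewrite /elim_var.
by case: excluded_middle_informative => // Eyx; rewrite Eyx in Hy.
Qed.

Lemma occurs_check (t : V -> tm) x b : t x = subst t b -> b <> Var F x -> ~ occurs x b.
Proof.
case: b => [y|g us] Htx Hb Ho; first by apply: Hb; rewrite (occurs_var Ho).
by have := occurs_tsize_fun t Ho; rewrite -Htx ltnn.
Qed.

Lemma unifies_elim_var t x b Es : unifies t (eqset ((Var F x, b) :: Es)) ->
  unifies t (eqset (map (subst_eqn (elim_var x b)) Es)).
Proof.
case/unifies_cons=> /= Htx Ht e /List.in_map_iff [e0 [<- He0]].
by rewrite /= !elim_var_unifier //; apply: Ht.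
Qed.

Lemma mgu_elim_var x b Es (th : V -> tm) : ~ occurs x b ->
  mgu th (eqset (map (subst_eqn (elim_var x b)) Es)) ->
  mgu (fun y => subst th (elim_var x b y)) (eqset ((Var F x, b) :: Es)).
Proof.
move=> Hx [Hth Hgen]; split.
  apply/unifies_cons; split=> [|e He] /=; rewrite -!subst_comp.
    by rewrite elim_var_fixes // /elim_var; case: excluded_middle_informative.
  by apply: (Hth (subst_eqn _ e)); apply/List.in_map_iff; exists e.
move=> t Ht; have [d Hd] := Hgen t (unifies_elim_var Ht).
have Htx : t x = subst t b by have [] := proj1 (unifies_cons _ _ _) Ht.
exists d => y; have -> : t y = subst t (elim_var x b y) by symmetry; exact: (elim_var_unifier (Var F y) Htx).
by rewrite subst_comp; apply: subst_ext => z; rewrite Hd.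
Qed.

Definition remove_var (x : V) (vs : seq V) : seq V :=
  List.remove (fun y z => excluded_middle_informative (y = z)) x vs.

Lemma covers_elim_var vs x b Es : ~ occurs x b -> covers vs ((Var F x, b) :: Es) ->
  covers (remove_var x vs) (map (subst_eqn (elim_var x b)) Es).
Proof.
move=> Hx Hcov y e He; have [e0 [<- He0]] := proj1 (List.in_map_iff _ _ _) He.
have Hy : forall u, (forall z, occurs z u -> List.In z vs) ->
    occurs y (subst (elim_var x b) u) -> List.In y (remove_var x vs).
  move=> u Hu Hocc; have [z [Hz]] := occurs_subst Hocc; rewrite /elim_var.
  case: excluded_middle_informative => [_|Hzx] /= Hyz; last first.
    by rewrite (occurs_var Hyz); apply: List.in_in_remove; [exact: Hzx | apply: Hu].
  apply: List.in_in_remove; first by move=> E; apply: Hx; rewrite -E.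
  by apply: (Hcov y (Var F x, b)); [left | right].
by case=> /Hy; apply=> z Hz; apply: (Hcov z e0); by [right | left | right].
Qed.

Definition mgu_exists_below (n : nat) : Prop :=
  forall vs Es, size vs < n -> covers vs Es -> unifiable Es -> exists s, mgu s (eqset Es).

Lemma mgu_exists_var_case n vs x b Es : mgu_exists_below n -> size vs < n.+1 ->
  b <> Var F x -> covers vs ((Var F x, b) :: Es) -> unifiable ((Var F x, b) :: Es) ->
  exists s, mgu s (eqset ((Var F x, b) :: Es)).
Proof.
move=> IHn Hvs Hb Hcov [tau Htau].
have Hx : ~ occurs x b.
  by apply: (occurs_check (t := tau)) => //; have [] := proj1 (unifies_cons _ _ _) Htau.
have Hxvs : List.In x vs by apply: (Hcov x (Var F x, b)); [left | left; constructor].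
have [th Hth] : exists th, mgu th (eqset (map (subst_eqn (elim_var x b)) Es)).
  apply: (IHn (remove_var x vs)); last by exists tau; apply: unifies_elim_var.
    have Hlt : size (remove_var x vs) < size vs by apply/ltP; apply: List.remove_length_lt.
    exact: leq_trans Hlt Hvs.
  exact: covers_elim_var.
by exists (fun y => subst th (elim_var x b y)); apply: mgu_elim_var.
Qed.

(* Syntactic unification, by induction on the number of variables and then the size. *)
Lemma mgu_exists_bounded n : mgu_exists_below n.
Proof.
elim: n => [//|n IHn] vs Es Hvs.
elim: {Es}(esize Es) {-2}Es (leqnn (esize Es)) => [|m IHm] [|[a b] Es] Hm Hcov Hun;
  try by exists (@Var F V); apply: mgu_nil.
  by move: Hm (tsize_gt0 a); rewrite /esize /=; lia.
have Hcov' : covers vs Es by move=> y e He; apply: (Hcov y e); right.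
have Hcov_swap : covers vs ((b, a) :: Es).
  by move=> y e [<-|He] Hy; [apply: (Hcov y (a, b)); [left | tauto] | apply: (Hcov y e); [right|]].
case: a Hm Hcov Hun Hcov_swap => [x|f ts] Hm Hcov Hun Hcov_swap.
  have [Eb|Hb] := excluded_middle_informative (b = Var F x); last first.
    exact: mgu_exists_var_case IHn Hvs Hb Hcov Hun.
  subst b.
  have [s Hs] : exists s, mgu s (eqset Es).
    apply: IHm Hcov' _; first by move: Hm; rewrite /esize /=; lia.
    by have [t /unifies_drop Ht] := Hun; exists t.
  by exists s; apply: mgu_equiv Hs => t; rewrite unifies_drop.
case: b Hm Hcov Hun Hcov_swap => [x|g us] Hm Hcov Hun Hcov_swap.
  have [s Hs] : exists s, mgu s (eqset ((Var F x, Fun f ts) :: Es)).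
    apply: (mgu_exists_var_case IHn Hvs) => //.
    by have [t /unifies_swap Ht] := Hun; exists t.
  by exists s; apply: mgu_equiv Hs => t; rewrite unifies_swap.
have [t0 Ht0] := Hun.
have [Efg Emap] : f = g /\ map (subst t0) ts = map (subst t0) us.
  by case: (Ht0 (Fun f ts, Fun g us) (or_introl erefl)).
subst g; have Hsz : size ts = size us by rewrite -(size_map (subst t0) ts) Emap size_map.
have [s Hs] : exists s, mgu s (eqset (zip ts us ++ Es)).
  apply: IHm; last by exists t0; move: Ht0; rewrite unifies_decompose.
    by move: Hm; rewrite esize_cat esize_zip // /esize /= -/(esize Es); lia.
  move=> y [a b] He Hy; case: (List.in_app_or _ _ _ He) => [Hab|He']; last exact: Hcov' y _ He' Hy.
  have [Ha Hb] := in_zip Hab; apply: (Hcov y (Fun f ts, Fun f us)); first by left.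
  by case: Hy => Hy; [left | right]; econstructor; eauto.
by exists s; apply: mgu_equiv Hs => t; rewrite unifies_decompose.
Qed.

Fixpoint vars (t : tm) : seq V :=
  match t with Var x => [:: x] | Fun _ ts => flatten (map vars ts) end.

Lemma occurs_vars x (t : tm) : occurs x t -> List.In x (vars t).
Proof.
elim=> [|f ts u Hin _ IH] /=; first by left.
by elim: ts Hin => //= a ts IHts [->|H]; apply: List.in_or_app; [left | right; apply: IHts].
Qed.

Lemma mgu_of_unifiable_eqn (a b : tm) (sg : V -> tm) : subst sg a = subst sg b ->
  exists s, mgu s (fun e => e = (a, b)).
Proof.
move=> H; have [s Hs] : exists s, mgu s (eqset [:: (a, b)]).
  apply: (@mgu_exists_bounded _ (vars a ++ vars b) _ (leqnn _)).
    move=> x e [<-|[]] /= [Hx|Hx]; apply: List.in_or_app; [left | right]; exact: occurs_vars.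
  by exists sg => e [<-|[]].
by exists s; apply: mgu_ext Hs => e; split=> [[<-|[]]|->]; [|left].
Qed.

End Unification.

Section Positions.
Variables (F V : Type).
Notation tm := (term F V).

Lemma parallel_nil_l q : parallel [::] q = false.
Proof. by case: q. Qed.

Lemma parallel_nil_r q : parallel q [::] = false.
Proof. by rewrite /parallel; case: q. Qed.

Lemma parallel_cons i p j q :
  parallel (i :: p) (j :: q) = if i == j then parallel p q else true.
Proof.
rewrite /parallel /=; case: (i =P j) => [->|/eqP Hij]; first by rewrite eqxx.
by rewrite eq_sym (negbTE Hij).
Qed.

Lemma nth_error_upd (A : Type) (g : A -> A) xs i j : i <> j ->
  List.nth_error (upd_nth g xs i) j = List.nth_error xs j.
Proof. by elim: xs i j => [|x xs IH] [|i] [|j] //= H; apply: IH => E; apply: H; rewrite E. Qed.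

Lemma nth_error_upd_same (A : Type) (g : A -> A) xs i :
  List.nth_error (upd_nth g xs i) i = option_map g (List.nth_error xs i).
Proof. by elim: xs i => [|x xs IH] [|i] //=. Qed.

Lemma upd_comm (A : Type) (g h : A -> A) xs i j : i <> j ->
  upd_nth g (upd_nth h xs i) j = upd_nth h (upd_nth g xs j) i.
Proof. by elim: xs i j => [|x xs IH] [|i] [|j] //= H; rewrite IH // => E; apply: H; rewrite E. Qed.

Lemma upd_upd (A : Type) (g h : A -> A) xs i :
  upd_nth g (upd_nth h xs i) i = upd_nth (fun a => g (h a)) xs i.
Proof. by elim: xs i => [|x xs IH] [|i] //=; rewrite IH. Qed.

Lemma upd_ext (A : Type) (g h : A -> A) xs i :
  (forall a, List.nth_error xs i = Some a -> g a = h a) -> upd_nth g xs i = upd_nth h xs i.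
Proof. by elim: xs i => [|x xs IH] [|i] //= H; rewrite ?H ?IH. Qed.

Lemma map_upd (A B : Type) (f : A -> B) (g : A -> A) (g' : B -> B) xs i :
  (forall a, List.nth_error xs i = Some a -> f (g a) = g' (f a)) ->
  map f (upd_nth g xs i) = upd_nth g' (map f xs) i.
Proof. by elim: xs i => [|x xs IH] [|i] //= H; rewrite ?H ?IH. Qed.

Lemma seq_nth_error_map (A B : Type) (f : A -> B) xs i :
  List.nth_error (map f xs) i = option_map f (List.nth_error xs i).
Proof. by elim: xs i => [|x xs IH] [|i] //=. Qed.

Lemma subterm_replace_par (t : tm) p q u : parallel p q ->
  subterm_at (replace_at t p u) q = subterm_at t q.
Proof.
elim: p t q => [|i p IH] t [|j q] //; rewrite ?parallel_nil_r // parallel_cons.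
case: t => [x|f ts] //= Hpq; case: eqVneq Hpq => [<-|Hij] Hpq.
  by rewrite nth_error_upd_same; case: (List.nth_error ts i) => //= a; apply: IH.
by rewrite nth_error_upd // => E; rewrite E eqxx in Hij.
Qed.

Lemma replace_comm_par (t : tm) p q u v : parallel p q ->
  replace_at (replace_at t p u) q v = replace_at (replace_at t q v) p u.
Proof.
elim: p t q => [|i p IH] t [|j q] //; rewrite ?parallel_nil_r // parallel_cons.
case: t => [x|f ts] //= Hpq; congr Fun; case: eqVneq Hpq => [<-|Hij] Hpq.
  by rewrite !upd_upd; apply: upd_ext => a _; apply: IH.
by apply: upd_comm => E; rewrite E eqxx in Hij.
Qed.

Lemma subterm_replace_below (t : tm) q w p a : subterm_at t q = Some a ->
  subterm_at (replace_at t q w) (q ++ p) = subterm_at w p.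
Proof.
elim: q t => [|i q IH] [x|f ts] //= H; rewrite nth_error_upd_same.
by move: H; case: (List.nth_error ts i) => //= b; apply: IH.
Qed.

Lemma replace_replace_below (t : tm) q w p v a : subterm_at t q = Some a ->
  replace_at (replace_at t q w) (q ++ p) v = replace_at t q (replace_at w p v).
Proof.
elim: q t => [|i q IH] [x|f ts] //= H; congr Fun; rewrite upd_upd.
by apply: upd_ext => b Hb; apply: IH; rewrite Hb in H.
Qed.

Lemma subterm_subst (s : V -> tm) (t : tm) p u : subterm_at t p = Some u ->
  subterm_at (subst s t) p = Some (subst s u).
Proof.
elim: p t => [|i p IH] t /=; first by case=> ->.
case: t => [x|f ts] //=; rewrite seq_nth_error_map.
by case: (List.nth_error ts i) => //= b; apply: IH.
Qed.

Lemma replace_subst (s : V -> tm) (t : tm) p a u : subterm_at t p = Some a ->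
  subst s (replace_at t p u) = replace_at (subst s t) p (subst s u).
Proof.
elim: p t => [|i p IH] [x|f ts] H //=; first by case: (s x).
congr Fun.
by apply: map_upd => b Hb; apply: IH; rewrite /= Hb in H.
Qed.

End Positions.

Section Rewriting.
Variables (F V : Type).
Notation tm := (term F V).
Implicit Types (R P Q : rule F V -> Prop).

Lemma rstep_mono P Q s t : (forall rl, P rl -> Q rl) -> rstep P s t -> rstep Q s t.
Proof. by move=> PQ [l [r [sg [p [Hlr Hst]]]]]; exists l, r, sg, p; split=> //; apply: PQ. Qed.

Lemma rstep_subst R (s : V -> tm) a b : rstep R a b -> rstep R (subst s a) (subst s b).
Proof.
case=> l [r [sg [p [HR [Hsub ->]]]]]; exists l, r, (fun x => subst s (sg x)), p.
by rewrite (subterm_subst s Hsub) (replace_subst s _ Hsub) !subst_comp.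
Qed.

Lemma rstar_subst R (s : V -> tm) a b : rstar R a b -> rstar R (subst s a) (subst s b).
Proof.
elim=> [x y /(rstep_subst s)|x|x y z _ H1 _ H2]; by [apply: rt_step | apply: rt_refl | apply: rt_trans H2].
Qed.

Lemma rstep_ctx R (x : tm) q a0 a b : subterm_at x q = Some a0 ->
  rstep R a b -> rstep R (replace_at x q a) (replace_at x q b).
Proof.
move=> Hq [l [r [sg [p [HR [Hsub ->]]]]]]; exists l, r, sg, (q ++ p).
by rewrite (subterm_replace_below _ _ Hq) (replace_replace_below _ _ _ Hq).
Qed.

Lemma rstar_ctx R (x : tm) q a0 a b : subterm_at x q = Some a0 ->
  rstar R a b -> rstar R (replace_at x q a) (replace_at x q b).
Proof.
move=> Hq; elim=> [u v /(rstep_ctx Hq)|u|u v w _ H1 _ H2];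
  by [apply: rt_step | apply: rt_refl | apply: rt_trans H2].
Qed.

Lemma subterm_par_replace (s : tm) (g : pos -> tm) Ps q :
  (forall q', q' \in Ps -> parallel q' q) ->
  subterm_at (par_replace s Ps g) q = subterm_at s q.
Proof.
elim: Ps => //= q' Ps IH H; rewrite subterm_replace_par ?H ?mem_head //.
by apply: IH => q'' Hq''; apply: H; rewrite inE Hq'' orbT.
Qed.

(* Contracting pairwise parallel redexes of s, one after another, below a context
   that has already been changed at a further parallel position p. *)
Lemma rstar_par_replace R (s w : tm) p (g : pos -> tm) (Ps : seq pos) :
  (forall q, q \in Ps -> parallel p q) ->
  (forall q q', q \in Ps -> q' \in Ps -> q != q' -> parallel q q') -> uniq Ps ->
  (forall q, q \in Ps -> exists l r (th : V -> tm), R (l, r) /\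
      subterm_at s q = Some (subst th l) /\ g q = subst th r) ->
  rstar R (replace_at s p w) (replace_at (par_replace s Ps g) p w).
Proof.
elim: Ps => [|q Ps IH] Hp Hpar /= Hu Hredex; first exact: rt_refl.
have inPs q' : q' \in Ps -> q' \in q :: Ps by rewrite inE => ->; rewrite orbT.
move: Hu => /andP [HqPs Hu].
apply: rt_trans (IH _ _ Hu _) _.
- by move=> q' /inPs; apply: Hp.
- by move=> a b /inPs Ha /inPs Hb; apply: Hpar.
- by move=> q' /inPs; apply: Hredex.
apply: rt_step.
have [l [r [th [HR [Hs Hg]]]]] := Hredex q (mem_head _ _).
have Hpq : parallel p q by apply: Hp; rewrite mem_head.
exists l, r, th, q; split=> //; split.
  rewrite subterm_replace_par // subterm_par_replace // => q' Hq'.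
  apply: Hpar; rewrite ?mem_head ?inPs //.
  by apply/eqP=> E; move: HqPs; rewrite -E Hq'.
by rewrite -Hg (replace_comm_par _ _ _ Hpq).
Qed.

End Rewriting.

Section Peaks.
Variables (F V : Type) (R : rule F V -> Prop).
Notation tm := (term F V).

Lemma var_disjoint_sym (rl1 rl2 : rule F V) : var_disjoint rl1 rl2 -> var_disjoint rl2 rl1.
Proof. by move=> H x [H1 H2]; apply: (H x). Qed.

(* A critical peak is the parallel critical peak with the single position {p}. *)
Lemma crit_peak_par t s u : crit_peak R t s u -> par_crit_peak R t s u.
Proof.
case=> l1 [r1 [l2 [r2 [p [sg [Hv1 [Hv2 [Hd [Hfp [Hmgu [Hroot [-> [-> ->]]]]]]]]]]]]].
have in1 q : q \in [:: p] -> q = p by rewrite inE => /eqP.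
exists l2, r2, (fun _ => l1), (fun _ => r1), [:: p], sg.
do 2 split=> //; split; first by move=> q _; apply: var_disjoint_sym.
split; first by move=> q q' /in1 -> /in1 ->; rewrite eqxx.
do 2 split=> //; split; first by move=> q /in1 ->.
split; first by move=> q q' /in1 -> /in1 ->; rewrite eqxx.
split; last by split=> // Ep; apply: Hroot; case: Ep.
apply: mgu_ext Hmgu => e; split=> [[E1 E2]|[q [/in1 -> E]]] //.
by exists p; rewrite mem_head.
Qed.

Lemma variant_instance (l' r' : tm) (sg : V -> tm) : variant_of R (l', r') ->
  exists l r (th : V -> tm), R (l, r) /\ subst sg l' = subst th l /\ subst sg r' = subst th r.
Proof.
case=> -[l r] [HR [pi [_ [/= -> ->]]]].
by exists l, r, (fun x => sg (pi x)); rewrite !subst_comp.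
Qed.

Lemma root_position_alone (Ps : seq pos) : uniq ([::] :: Ps) ->
  (forall p q, p \in [::] :: Ps -> q \in [::] :: Ps -> p != q -> parallel p q) -> Ps = [::].
Proof.
case: Ps => [//|q Ps] /= /andP [Hq _] Hpar.
have Hne : [::] != q by apply: contraNneq Hq => ->; rewrite mem_head.
have Hq2 : q \in [:: [::], q & Ps] by rewrite !inE eqxx orbT.
by move: (Hpar [::] q (mem_head _ _) Hq2 Hne); rewrite parallel_nil_l.
Qed.

(* Splitting a parallel critical peak at one of its positions p: the critical peak
   of the rule at p with the outer rule has the parallel peak as an instance, up to
   R-steps at the remaining positions on the left. *)
Lemma par_peak_split t s u : par_crit_peak R t s u ->
  exists t' s' u' (d : V -> tm), crit_peak R t' s' u' /\
    s = subst d s' /\ u = subst d u' /\ rstar R (subst d t') t.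
Proof.
case=> l [r [lp [rp [Ps [sg [Hvlr [HvP [HdP [_ [HPne [HPu [Hfp [Hpar [Hmgu [Hroot [-> [-> ->]]]]]]]]]]]]]]]]].
case: Ps HPne HvP HdP HPu Hfp Hpar Hmgu Hroot => [//|p Ps] _ HvP HdP HPu Hfp Hpar Hmgu Hroot.
have Hp : p \in p :: Ps := mem_head _ _.
have inPs q : q \in Ps -> q \in p :: Ps by rewrite inE => ->; rewrite orbT.
have unif_at q f ts : q \in p :: Ps -> subterm_at l q = Some (Fun f ts) ->
    subst sg (lp q) = subst sg (Fun f ts).
  by move=> Hq Hlq; apply: (Hmgu.1 (lp q, Fun f ts)); exists q.
have [f [ts Hlp]] := Hfp p Hp.
have [sp Hsp] : exists sp, mgu sp (fun e => e.1 = lp p /\ subterm_at l p = Some e.2).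
  have [sp Hsp] := mgu_of_unifiable_eqn (unif_at p f ts Hp Hlp).
  by exists sp; apply: mgu_ext Hsp => -[a b]; rewrite /= Hlp; split=> [[-> ->]|[-> [<-]]].
have [d Hd] : exists d : V -> tm, forall x, sg x = subst d (sp x).
  by apply: Hsp.2 => -[a b] /= [->]; rewrite Hlp => -[<-]; apply: unif_at.
have Hsgd t0 : subst sg t0 = subst d (subst sp t0) by rewrite subst_comp; apply: subst_ext.
exists (replace_at (subst sp l) p (subst sp (rp p))), (subst sp l), (subst sp r), d.
split; [|split; [exact: Hsgd | split; [exact: Hsgd|]]].
  exists (lp p), (rp p), l, r, p, sp; do 5 (split; first by auto using var_disjoint_sym).
  split=> // Ep; subst p; apply: Hroot.
  by rewrite (root_position_alone HPu Hpar).
rewrite (replace_subst d _ (subterm_subst sp Hlp)) -!Hsgd /=.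
move: HPu => /= /andP [HpPs HPu].
apply: rstar_par_replace => //.
- move=> q Hq; apply: Hpar; rewrite ?Hp ?inPs //.
  by apply: contraNneq HpPs => ->.
- by move=> q q' /inPs Hq /inPs Hq'; apply: Hpar.
- move=> q /inPs Hq; have [l0 [r0 [th [HR [El Er]]]]] := variant_instance sg (HvP q Hq).
  have [f1 [ts1 Hlq]] := Hfp q Hq.
  exists l0, r0, th; split=> //; split=> //.
  by rewrite (subterm_subst sg Hlq) -(unif_at q f1 ts1 Hq Hlq) El.
Qed.

Lemma pcps_step_cps x y : rstep (PCPS R) x y -> exists z, rstep (CPS R) x z /\ rstar R z y.
Proof.
case=> s [v [th [q [[t [u [Hpcp Hv]]] [Hsub ->]]]]].
have [t' [s' [u' [d [Hcp [Es [Eu Ht]]]]]]] := par_peak_split Hpcp.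
have cps_step w : w = t' \/ w = u' ->
    rstep (CPS R) x (replace_at x q (subst th (subst d w))).
  move=> Hw; exists s', w, (fun x => subst th (d x)), q; split; first by exists t', u'.
  by rewrite -!subst_comp -Es.
case: Hv => /= ->.
  exists (replace_at x q (subst th (subst d t'))); split; first by apply: cps_step; left.
  exact: rstar_ctx Hsub (rstar_subst th Ht).
exists (replace_at x q (subst th u)); split; last exact: rt_refl.
by rewrite Eu; apply: cps_step; right.
Qed.

Lemma rel_mid_CPS_PCPS s t : rel_mid R (CPS R) s t <-> rel_mid R (PCPS R) s t.
Proof.
split=> -[s' [t' [Hs [Hstep Ht]]]].
  exists s', t'; do 2 split=> //; apply: rstep_mono Hstep => rl [t0 [u0 [Hcp Hor]]].
  by exists t0, u0; split=> //; apply: crit_peak_par.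
have [z [Hz1 Hz2]] := pcps_step_cps Hstep.
by exists s', z; do 2 split=> //; apply: rt_trans Ht.
Qed.

End Peaks.

Lemma rel_terminating_ext (F V : Type) (P Q R : rule F V -> Prop) :
  (forall s t, rel_mid R P s t <-> rel_mid R Q s t) ->
  (rel_terminating P R <-> rel_terminating Q R).
Proof. by move=> H; split=> Hn [a Ha]; apply: Hn; exists a => i; apply/H. Qed.

Theorem mainTheorem9 (F V : Type) (R : rule F V -> Prop) (HR : is_trs R) :
  (forall s t : term F V, rel_mid R (CPS R) s t <-> rel_mid R (PCPS R) s t) /\
  (rel_terminating (CPS R) R <-> rel_terminating (PCPS R) R).
Proof.
have Hmid : forall s t : term F V, rel_mid R (CPS R) s t <-> rel_mid R (PCPS R) s t.
  exact: rel_mid_CPS_PCPS.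
by split; last apply: rel_terminating_ext.
Qed.
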